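(* Let $G$ be a connected graph with $12$ vertices. Suppose one of the following holds: (1) $6\le \Delta(G)\le 8$ and $e(G)=12+k$ for some $1\le k\le 8$; (2) $\Delta(G)=9$ and $e(G)=12+k$ for some $1\le k\le 6$; (3) $\Delta(G)=10$ and $e(G)=12+k$ for some $1\le k\le 3$. Then $\frac{q(G)}{R(G)}<\frac{12}{\sqrt{11}}$.
   Context: All graphs are finite and simple; $e(G)$ is the number of edges and $\Delta(G)$ the maximum degree. For a vertex $u$, $d(u)$ is its degree. The Randić index is $R(G)=\sum_{\{u,v\}\in E(G)} \frac{1}{\sqrt{d(u)d(v)}}$. The signless Laplacian is $Q=D+A$ ($D$ the diagonal degree matrix, $A$ the adjacency matrix), and $q(G)$ is its largest eigenvalue. *)

From HB Require Import structures.
From mathcomp Require Import all_boot all_order all_algebra.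
Set Implicit Arguments. Unset Strict Implicit. Unset Printing Implicit Defensive.
Import Order.TTheory GRing.Theory Num.Theory.

Definition simple_graph (n : nat) (g : rel 'I_n) : Prop :=
  irreflexive g /\ symmetric g.

Definition connected_graph (n : nat) (g : rel 'I_n) : Prop :=
  forall u v : 'I_n, connect g u v.

Definition deg (n : nat) (g : rel 'I_n) (u : 'I_n) : nat := #|[set v | g u v]|.

Definition max_deg (n : nat) (g : rel 'I_n) : nat := \max_(u : 'I_n) deg g u.

(* Edges as unordered pairs {u,v}, represented once by (u,v) with u < v. *)
Definition edge_set (n : nat) (g : rel 'I_n) : {set 'I_n * 'I_n} :=
  [set p | g p.1 p.2 && (p.1 < p.2)%N].

Definition num_edges (n : nat) (g : rel 'I_n) : nat := #|edge_set g|.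

Local Open Scope ring_scope.

Definition randic (R : rcfType) (n : nat) (g : rel 'I_n) : R :=
  \sum_(p in edge_set g) (Num.sqrt ((deg g p.1)%:R * (deg g p.2)%:R))^-1.

Definition signless_laplacian (R : rcfType) (n : nat) (g : rel 'I_n) : 'M[R]_n :=
  \matrix_(i, j) ((i == j)%:R * (deg g i)%:R + (g i j)%:R).

Definition is_q_index (R : rcfType) (n : nat) (g : rel 'I_n) (q : R) : Prop :=
  eigenvalue (signless_laplacian R g) q /\
  (forall a : R, eigenvalue (signless_laplacian R g) a -> a <= q).

(* Every vertex has degree between 1 and 10, so each edge uv contributes at least
   (7/25)(1/d(u) + 1/d(v)) to R(G); summing over the edges gives R(G) >= (7/25) 12 > sqrt 11.
   On the other hand, weighting a nonnegative eigenvector entry by degrees shows that q is at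
   most d(j) + S(j)/d(j) for some vertex j, where S(j) is the sum of the degrees of its
   neighbours. Bounding S(j) both by Delta d(j) and by 2e(G) - d(j) gives q <= 12 under each of
   the three hypotheses, hence q / R(G) <= 12 / R(G) < 12 / sqrt 11. *)
From HB Require Import structures.
From mathcomp Require Import all_boot all_order all_algebra.
From mathcomp Require Import ring lra zify.
Set Implicit Arguments. Unset Strict Implicit. Unset Printing Implicit Defensive.
Import Order.TTheory GRing.Theory Num.Theory.
Local Open Scope ring_scope.

(* For d < a the bound S <= D d suffices; otherwise (d - a)(d - D) <= 0 together with
   a + D = c + 1 reads d^2 + (a D - d) <= c d. *)
Lemma sq_add_le_mul (a D c m d S : nat) : (a + D = c.+1)%N -> (2 * m <= a * D)%N ->
  (d <= D)%N -> (S <= D * d)%N -> (S + d <= 2 * m)%N -> (d * d + S <= c * d)%N.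
Proof.
move=> acD am dD SD Sm.
have [da|/subnKC da] := ltnP d a; first by nia.
move/subnKC: dD => dD.
have : (d * d + a * D <= a * d + d * D)%N by rewrite -da -dD; nia.
by nia.
Qed.

Section Degrees.

Variables (n : nat) (g : rel 'I_n).

Definition nbr_deg_sum (j : 'I_n) : nat := (\sum_i deg g i * g i j)%N.

Lemma deg_le_max_deg u : (deg g u <= max_deg g)%N.
Proof. exact: (@leq_bigmax _ (fun u => deg g u) u). Qed.

Lemma connected_deg_gt0 u : (1 < n)%N -> connected_graph g -> (0 < deg g u)%N.
Proof.
move=> n_gt1 cg.
have [v uv] : exists v : 'I_n, u != v.
  pose w0 := Ordinal (ltnW n_gt1); pose w1 := Ordinal n_gt1.
  have [->|uw0] := eqVneq u w0; last by exists w0.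
  by exists w1; rewrite -val_eqE.
case/connectP: (cg u v) => -[|y p] /=; first by move=> _ uv_eq; rewrite uv_eq eqxx in uv.
by case/andP => guy _ _; apply/card_gt0P; exists y; rewrite inE.
Qed.

Hypotheses (irr_g : irreflexive g) (sym_g : symmetric g).

Lemma sum_edge_set_ends (V : nmodType) (h : 'I_n -> V) :
  \sum_(p in edge_set g) (h p.1 + h p.2) = \sum_u h u *+ deg g u.
Proof.
have -> : \sum_u h u *+ deg g u = \sum_(p | g p.1 p.2) h p.1.
  rewrite (eq_bigr (fun u => \sum_(v | g u v) h u)) ?pair_big_dep // => u _.
  by rewrite /deg -sumr_const; apply: eq_bigl => v; rewrite inE.
rewrite big_split /= [RHS](bigID (fun p : 'I_n * 'I_n => (p.1 < p.2)%N)) /=.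
congr (_ + _); first by apply: eq_bigl => p; rewrite inE.
pose swap := fun p : 'I_n * 'I_n => (p.2, p.1).
have swapK : involutive swap by case.
rewrite (reindex_inj (inv_inj swapK)) /=.
apply: eq_bigl => -[a b] /=; rewrite inE /= (sym_g b a).
case gab: (g a b) => //=.
have : a != b by apply: contraTneq gab => ->; rewrite irr_g.
by rewrite neq_ltn => /orP[] ltab; rewrite ltab /= ?ltnNge -?leqNgt ltnW.
Qed.

Lemma handshake : (\sum_u deg g u = 2 * num_edges g)%N.
Proof.
transitivity (\sum_u (1%N *+ deg g u)%R); first by apply: eq_bigr => u _; rewrite natn.
by rewrite -(sum_edge_set_ends (fun _ => 1%N)) sum_nat_const mulnC.
Qed.

Lemma nbr_deg_sum_le_max_deg j : (nbr_deg_sum j <= max_deg g * deg g j)%N.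
Proof.
apply: (@leq_trans (\sum_i max_deg g * g i j)%N).
  by apply: leq_sum => i _; rewrite leq_mul2r deg_le_max_deg orbT.
rewrite -big_distrr /= leq_mul2l; apply/orP; right.
rewrite /deg -sum1_card [X in (_ <= X)%N]big_mkcond /=.
by apply: eq_leq; apply: eq_bigr => i _; rewrite inE sym_g; case: (g i j).
Qed.

Lemma nbr_deg_sum_add_deg_le j : (nbr_deg_sum j + deg g j <= 2 * num_edges g)%N.
Proof.
rewrite /nbr_deg_sum -handshake (bigD1 j) //= irr_g muln0 add0n.
rewrite [X in (_ <= X)%N](bigD1 j) //= addnC leq_add2l.
by apply: leq_sum => i _; case: (g i j); rewrite ?muln1 ?muln0.
Qed.

Lemma deg_sq_add_nbr_deg_sum_le (a D c : nat) j :
  (max_deg g <= D)%N -> (a + D = c.+1)%N -> (2 * num_edges g <= a * D)%N ->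
  (deg g j * deg g j + nbr_deg_sum j <= c * deg g j)%N.
Proof.
move=> maxD acD edges_le.
apply: (sq_add_le_mul acD edges_le).
- exact: leq_trans (deg_le_max_deg j) maxD.
- exact: leq_trans (nbr_deg_sum_le_max_deg j) (leq_mul maxD (leqnn _)).
- exact: nbr_deg_sum_add_deg_le.
Qed.

End Degrees.

Section Randic.

Variable R : rcfType.

(* The constant 7/25 comes from (10x - y)(10y - x) >= 0, i.e. 49 (x + y)^2 <= 625 x y. *)
Lemma inv_sqrt_ge_inv_add (x y : R) : 0 < x -> 0 < y -> y <= 10%:R * x -> x <= 10%:R * y ->
  7%:R / 25%:R * (x^-1 + y^-1) <= (Num.sqrt (x * y))^-1.
Proof.
move=> x0 y0 yx xy.
set s := Num.sqrt (x * y).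
have xy0 : 0 < x * y by rewrite mulr_gt0.
have s0 : 0 < s by rewrite sqrtr_gt0.
have ss : s ^+ 2 = x * y by rewrite sqr_sqrtr // ltW.
have ratio_ge0 : 0 <= (10%:R * x - y) * (10%:R * y - x) by apply: mulr_ge0; lra.
have sum_le : 7%:R * (x + y) <= 25%:R * s by nra.
have -> : x^-1 + y^-1 = (x + y) / s ^+ 2 by rewrite ss; field; rewrite !lt0r_neq0.
have -> : 7%:R / 25%:R * ((x + y) / s ^+ 2) = (7%:R * (x + y) / (25%:R * s)) * s^-1.
  by field; rewrite lt0r_neq0.
rewrite -[leRHS]mul1r; apply: ler_wpM2r; first by rewrite invr_ge0 ltW.
by rewrite ler_pdivrMr ?mul1r // mulr_gt0.
Qed.

Lemma randic_ge (n : nat) (g : rel 'I_n) : simple_graph g ->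
  (forall u, 0 < deg g u)%N -> (max_deg g <= 10)%N -> 7%:R / 25%:R * n%:R <= randic R g.
Proof.
move=> [irr sym] deg_gt0 max10.
have deg_ge1 u : (1 : R) <= (deg g u)%:R by rewrite ler1n.
have deg_le10 u : ((deg g u)%:R : R) <= 10%:R.
  by rewrite ler_nat (leq_trans (deg_le_max_deg _ u)).
have -> : n%:R = \sum_(p in edge_set g) (((deg g p.1)%:R : R)^-1 + ((deg g p.2)%:R)^-1).
  rewrite (sum_edge_set_ends irr sym (fun u => ((deg g u)%:R : R)^-1)).
  rewrite -[n in LHS]card_ord -sumr_const; apply: eq_bigr => u _.
  by rewrite -[_ *+ deg g u]mulr_natr mulVf // pnatr_eq0 -lt0n.
rewrite mulr_sumr; apply: ler_sum => p _.
move: (deg_ge1 p.1) (deg_ge1 p.2) (deg_le10 p.1) (deg_le10 p.2) => *.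
by apply: inv_sqrt_ge_inv_add; lra.
Qed.

End Randic.

Section SignlessLaplacian.

Variables (R : rcfType) (n : nat) (g : rel 'I_n).
Hypothesis deg_gt0 : forall u, (0 < deg g u)%N.

(* Take j maximising |v j| / d(j) for an eigenvector v and compare the j-th coordinate of
   v Q = q v with the same coordinate of the degree vector times Q. *)
Lemma signless_laplacian_eigenvalue_le_at (q : R) :
  eigenvalue (signless_laplacian R g) q ->
  exists j, q * (deg g j)%:R <= (deg g j * deg g j + nbr_deg_sum g j)%:R.
Proof.
move=> /eigenvalueP [v vQ v_neq0].
set d := fun i => ((deg g i)%:R : R).
have d_gt0 i : 0 < d i by rewrite ltr0n.
set w := fun i => `|v 0 i| / d i.
have vw i : `|v 0 i| = w i * d i by rewrite /w divfK // lt0r_neq0.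
have [i0 vi0] : exists i, v 0 i != 0.
  apply/existsP; apply: contraNT v_neq0 => /existsPn v0; apply/eqP/rowP => i.
  by rewrite mxE; apply/eqP; move: (v0 i); rewrite negbK.
case: (@arg_maxP _ _ 'I_n i0 xpredT w isT) => j _ w_max; exists j.
have wj_gt0 : 0 < w j by apply: lt_le_trans (w_max i0 isT); rewrite divr_gt0 ?normr_gt0.
have Q_ge0 k : 0 <= signless_laplacian R g k j by rewrite mxE addr_ge0 // mulr_ge0.
have vQj : \sum_i v 0 i * signless_laplacian R g i j = q * v 0 j.
  by move: (congr1 (fun M : 'rV_n => M 0 j) vQ); rewrite !mxE.
have dQj : \sum_i d i * signless_laplacian R g i j =
    (deg g j * deg g j + nbr_deg_sum g j)%:R.
  rewrite /nbr_deg_sum natrD natrM natr_sum.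
  rewrite (eq_bigr (fun k => d k * ((k == j)%:R * d k) + d k * (g k j)%:R)) => [|k _]; last first.
    by rewrite mxE mulrDr.
  rewrite big_split /= (bigD1 j) //= big1 ?addr0 => [|k /negbTE ->]; last first.
    by rewrite mul0r mulr0.
  by rewrite eqxx mul1r; congr (_ + _); apply: eq_bigr => k _; rewrite natrM.
rewrite -dQj -(ler_pM2l wj_gt0).
apply: (@le_trans _ _ `|q * v 0 j|).
  rewrite normrM vw mulrCA !mulrA -/(d j); apply: ler_wpM2r; first exact: ltW.
  apply: ler_wpM2r; first by rewrite invr_ge0 ltW.
  by apply: ler_wpM2r; [exact: normr_ge0 | exact: ler_norm].
rewrite -vQj mulr_sumr; apply: (le_trans (ler_norm_sum _ _ _)); apply: ler_sum => k _.
rewrite normrM (ger0_norm (Q_ge0 k)) mulrA; apply: ler_wpM2r => //.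
by rewrite vw; apply: ler_wpM2r; [exact: ltW | exact: w_max].
Qed.

Lemma signless_laplacian_eigenvalue_le (c : nat) (q : R) :
  (forall j, deg g j * deg g j + nbr_deg_sum g j <= c * deg g j)%N ->
  eigenvalue (signless_laplacian R g) q -> q <= c%:R.
Proof.
move=> bound /signless_laplacian_eigenvalue_le_at [j qj].
rewrite -(ler_pM2r (_ : 0 < (deg g j)%:R)) ?ltr0n //.
by apply: le_trans qj _; rewrite -natrM ler_nat.
Qed.

End SignlessLaplacian.

Theorem lemma3p6 (R : rcfType) (g : rel 'I_12) (q : R) :
  simple_graph g -> connected_graph g ->
  [\/ ((6 <= max_deg g <= 8)%N /\ exists2 k, (1 <= k <= 8)%N & num_edges g = (12 + k)%N),
      (max_deg g = 9%N /\ exists2 k, (1 <= k <= 6)%N & num_edges g = (12 + k)%N)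
    | (max_deg g = 10%N /\ exists2 k, (1 <= k <= 3)%N & num_edges g = (12 + k)%N)] ->
  is_q_index g q ->
  q / randic R g < 12%:R / Num.sqrt 11%:R.
Proof.
move=> sg cg cases [q_eig _]; have [irr sym] := sg.
have [a [D [maxD D10 acD edges_le]]] : exists a D, [/\ max_deg g <= D, D <= 10,
    a + D = 13 & 2 * num_edges g <= a * D]%N.
  case: cases => -[mx [k /andP[_ k_le] ->]].
  - by exists 5%N, 8%N; case/andP: mx; split => //; lia.
  - by exists 4%N, 9%N; split => //; lia.
  - by exists 3%N, 10%N; split => //; lia.
have deg_gt0 u : (0 < deg g u)%N by exact: connected_deg_gt0.
have q_le12 : q <= 12%:R.
  apply: signless_laplacian_eigenvalue_le q_eig => // j.
  exact: deg_sq_add_nbr_deg_sum_le maxD acD edges_le.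
have := randic_ge R sg deg_gt0 (leq_trans maxD D10).
set r := randic R g => r_ge.
set s := Num.sqrt (11%:R : R).
have s_gt0 : 0 < s by rewrite sqrtr_gt0 ltr0n.
have ss : s ^+ 2 = 11%:R by rewrite sqr_sqrtr // ler0n.
have s_lt_r : s < r by apply: lt_le_trans r_ge; nra.
apply: (@le_lt_trans _ _ (12%:R / r)).
  by apply: ler_wpM2r; rewrite // invr_ge0 ltW // (lt_trans s_gt0).
by rewrite ltr_pM2l ?ltr0n // ltf_pV2 ?posrE // (lt_trans s_gt0).
Qed.
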